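(* Let $\mathfrak p$ be a standard parabolic subalgebra of $\mathfrak g$ and $j\in\{1,\dots,n\}$. Then $w_j\in W^{\mathfrak p}$ if and only if $\alpha_j\notin\Sigma_{\mathfrak p}$. Moreover, for every $v\in W_+^{\mathfrak p}$ and every $w\in W^{\mathfrak p}$ we have $vw\in W^{\mathfrak p}$.
   Context: Let $\mathfrak g=\mathfrak{sl}_{n+1}(\mathbb C)$, $n\ge1$, $\Delta_+=\{\varepsilon_i-\varepsilon_j:i<j\}$, $\Delta_-=-\Delta_+$, $\Pi=\{\alpha_1,\dots,\alpha_n\}$, $\alpha_i=\varepsilon_i-\varepsilon_{i+1}$, $\theta=\alpha_1+\dots+\alpha_n$; $W$ the Weyl group generated by the simple reflections $s_i$. For $\Sigma\subset\Pi$, $\Delta_\Sigma$ is the root subsystem generated by $\Sigma$, $\mathfrak p_\Sigma$ the standard parabolic subalgebra, $\Sigma_{\mathfrak p_\Sigma}=\Sigma$, and $W^{\mathfrak p_\Sigma}=\{w\in W:\Delta_+\cap w(\Delta_-)\subset\Delta_+\setminus\Delta_\Sigma\}$. For $j=1,\dots,n$, $w_j\in W$ is the unique element preserving the set $\{\alpha_1,\dots,\alpha_n,-\theta\}$ with $w_j(-\theta)=\alpha_j$ (equivalently $w_j=(s_1s_2\cdots s_n)^j$); $W_+=\{e,w_1,\dots,w_n\}$ and $W_+^{\mathfrak p_\Sigma}=\{w\in W_+:w(\Sigma)=\Sigma\}$. *)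

(* Type A_n root system of sl_{n+1}(C), realised concretely:
   weights are integer vectors indexed by 'I_n.+1 (the eps_i), the Weyl group
   acts on them by permuting coordinates. Simple roots are indexed 0-based by
   'I_n (alpha k = eps_k - eps_(k+1)). *)
From HB Require Import structures.
From mathcomp Require Import all_boot all_order all_algebra all_fingroup.
Set Implicit Arguments. Unset Strict Implicit. Unset Printing Implicit Defensive.
Import GRing.Theory.
Local Open Scope ring_scope.

Section TypeA.
Variable n : nat.

Definition vec := {ffun 'I_n.+1 -> int}.

Definition eps (i : 'I_n.+1) : vec := [ffun k => ((k == i) : nat)%:Z].

Definition alpha (k : 'I_n) : vec := eps (widen_ord (leqnSn n) k) - eps (lift ord0 k).

Definition theta : vec := \sum_(k < n) alpha k.

Definition posroot (x : vec) : Prop :=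
  exists i j : 'I_n.+1, (i < j)%N /\ x = eps i - eps j.
Definition negroot (x : vec) : Prop := posroot (- x).
Definition isroot (x : vec) : Prop := posroot x \/ negroot x.

Definition in_span (S : {set 'I_n}) (x : vec) : Prop :=
  exists c : 'I_n -> int, (forall k, k \notin S -> c k = 0) /\
    x = \sum_(k < n) alpha k *~ c k.
Definition rootsub (S : {set 'I_n}) (x : vec) : Prop := isroot x /\ in_span S x.

(* action of a permutation on weights: w(eps_i) = eps_(w i) *)
Definition act (w : {perm 'I_n.+1}) (x : vec) : vec := [ffun k => x ((w^-1)%g k)].

(* composition in the usual (function) sense: (wmul v w) x = v (w x) *)
Definition wmul (v w : {perm 'I_n.+1}) : {perm 'I_n.+1} := (w * v)%g.

Definition sref (k : 'I_n) : {perm 'I_n.+1} := tperm (widen_ord (leqnSn n) k) (lift ord0 k).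

Definition Weyl : {set {perm 'I_n.+1}} := <<[set sref k | k in 'I_n]>>%g.

(* c = s_1 s_2 ... s_n (composition, s_n applied first) *)
Definition cox : {perm 'I_n.+1} := foldr wmul 1%g [seq sref k | k <- enum 'I_n].

(* w_j = (s_1 ... s_n)^j ; for k : 'I_n (0-based) this is w_(k+1) *)
Definition wj (k : 'I_n) : {perm 'I_n.+1} := (cox ^+ k.+1)%g.

Definition inWp (S : {set 'I_n}) (w : {perm 'I_n.+1}) : Prop :=
  w \in Weyl /\
  forall x, posroot x -> (exists y, negroot y /\ x = act w y) -> ~ rootsub S x.

Definition inWplus (w : {perm 'I_n.+1}) : Prop := w = 1%g \/ exists k, w = wj k.

(* W_+^{p_Sigma} = {w in W_+ : w(Sigma) = Sigma}, Sigma as a set of simple roots *)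
Definition inWplusp (S : {set 'I_n}) (w : {perm 'I_n.+1}) : Prop :=
  inWplus w /\
  (forall k, k \in S -> exists k', k' \in S /\ act w (alpha k) = alpha k') /\
  (forall k', k' \in S -> exists k, k \in S /\ act w (alpha k) = alpha k').

End TypeA.

From Pilot Require Import Defs.
From mathcomp Require Import all_boot all_order all_algebra all_fingroup.
From mathcomp Require Import zify.
Set Implicit Arguments. Unset Strict Implicit. Unset Printing Implicit Defensive.
Import GRing.Theory.
Local Open Scope ring_scope.

(* The proof rests on a combinatorial description of W^p:
     w lies in W^p  iff  w \in W and w^-1 has an ascent at every k in Sigma,
   i.e. w^-1(k) < w^-1(k+1) for all alpha_k in Sigma (lemma inWpP).
   One direction uses alpha_k itself as a witness; for the other, a root
   eps_a - eps_b of Delta_Sigma has every alpha_k (a <= k < b) in Sigma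
   (read off with the partial-sum functionals), so w^-1 is increasing on
   [a, b] and no positive root of Delta_Sigma is the image of a negative one.
   Next, w_j = c^j with c = s_1...s_n the cyclic shift i -> i+1 mod n+1, so
   w_j^-1 has a descent exactly at k = j: this gives the first claim.
   Finally, if v permutes the simple roots of Sigma, then v^-1 maps the pair
   (k, k+1) to some (k', k'+1) with k' in Sigma, so ascents of w^-1 on Sigma
   transfer to (vw)^-1 = w^-1 v^-1: this gives the second claim. *)

Section TypeAWeyl.
Variable n : nat.

(* The two coordinates of alpha_k = eps_(lo k) - eps_(hi k). *)
Local Notation lo := (widen_ord (leqnSn n)).
Local Notation hi := (lift ord0).

Lemma lo_neq_hi (k : 'I_n) : lo k != hi k.
Proof. by rewrite -(inj_eq val_inj) /= /bump /=; lia. Qed.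

Lemma act_eps_sub (w : {perm 'I_n.+1}) (p q : 'I_n.+1) :
  Defs.act w (eps p - eps q) = eps (w p) - eps (w q).
Proof. by apply/ffunP => k; rewrite !ffunE !(canF_eq (permKV w)). Qed.

Lemma eps_sub_inj (p q r s : 'I_n.+1) :
  p != q -> eps p - eps q = eps r - eps s -> p = r /\ q = s.
Proof.
move=> /negPf pq E.
have := congr1 (fun x : vec n => x p) E; have := congr1 (fun x : vec n => x q) E.
rewrite !ffunE !eqxx pq eq_sym pq.
by case: eqP => [//|_]; case: eqP => [//|_]; case: eqP; case: eqP.
Qed.

(* psum k x = x_0 + ... + x_k; on the simple roots it is the k-th coordinate
   functional, which lets us read coefficients off Z-combinations of alphas. *)
Definition psum (k : nat) (x : vec n) : int :=
  \sum_(i < n.+1) x i * ((i <= k)%N : nat)%:Z.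

Lemma psum_eps (k : nat) (j : 'I_n.+1) : psum k (eps j) = ((j <= k)%N : nat)%:Z.
Proof.
rewrite /psum (bigD1 j) //= ffunE eqxx mul1r big1 ?addr0 // => i /negPf ij.
by rewrite ffunE ij mul0r.
Qed.

Lemma psum_sub (k : nat) (x y : vec n) : psum k (x - y) = psum k x - psum k y.
Proof. by rewrite /psum -sumrB; apply: eq_bigr => i _; rewrite !ffunE mulrBl. Qed.

Lemma psum_alpha (k : nat) (m : 'I_n) : psum k (alpha m) = ((val m == k) : nat)%:Z.
Proof. by rewrite /alpha psum_sub !psum_eps /= /bump /=; case: ltngtP. Qed.

Lemma psum_span (k : nat) (c : 'I_n -> int) :
  psum k (\sum_(m < n) alpha m *~ c m) = \sum_(m < n) psum k (alpha m) * c m.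
Proof.
rewrite /psum; under eq_bigr => i _ do rewrite sum_ffunE mulr_suml.
rewrite exchange_big; apply: eq_bigr => m _; rewrite mulr_suml.
by apply: eq_bigr => i _; rewrite ffunMzE mulrzz mulrAC.
Qed.

(* If eps_a - eps_b lies in the span of Sigma, then its expansion
   alpha_a + ... + alpha_(b-1) forces every such alpha_k into Sigma. *)
Lemma span_interval (S : {set 'I_n}) (a b : 'I_n.+1) (k : 'I_n) :
  in_span S (eps a - eps b) -> (a <= k < b)%N -> k \in S.
Proof.
case=> c [c0 E] hk; apply/negPn/negP => kS.
have := congr1 (psum k) E.
rewrite psum_span psum_sub !psum_eps (bigD1 k) //= psum_alpha eqxx c0 //.
rewrite big1 => [|m mk]; last by rewrite psum_alpha (inj_eq val_inj) (negPf mk) mul0r.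
have -> : (a <= k)%N by lia.
by have -> : (b <= k)%N = false by lia.
Qed.

Definition no_inversion (S : {set 'I_n}) (w : {perm 'I_n.+1}) : Prop :=
  forall x, posroot x -> (exists y, negroot y /\ x = Defs.act w y) -> ~ rootsub S x.

Definition ascent_on (S : {set 'I_n}) (w : {perm 'I_n.+1}) : Prop :=
  forall k, k \in S -> ((w^-1)%g (lo k) < (w^-1)%g (hi k))%N.

(* A descent of w^-1 at k in Sigma exhibits alpha_k as an inversion. *)
Lemma no_inversion_ascent (S : {set 'I_n}) (w : {perm 'I_n.+1}) :
  no_inversion S w -> ascent_on S w.
Proof.
move=> noinv k kS.
have [//|desc|same] := ltngtP ((w^-1)%g (lo k)) ((w^-1)%g (hi k)); last first.
  by move/val_inj/perm_inj/eqP: same; rewrite (negPf (lo_neq_hi k)).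
exfalso.
have pos_alpha : posroot (alpha k).
  by exists (lo k), (hi k); split => //; rewrite /= /bump /=; lia.
apply: (noinv (alpha k) pos_alpha).
  exists (eps ((w^-1)%g (lo k)) - eps ((w^-1)%g (hi k))); split.
    by exists ((w^-1)%g (hi k)), ((w^-1)%g (lo k)); rewrite opprB.
  by rewrite act_eps_sub !permKV.
split; first by left.
exists (fun m => ((m == k) : nat)%:Z); split.
  by move=> m mS; case: eqP => // mk; rewrite mk kS in mS.
by rewrite (bigD1 k) //= eqxx big1 ?addr0 // => m /negPf ->; rewrite mulr0z.
Qed.

(* Conversely, ascents on Sigma make w^-1 increasing along any root string of
   Delta_Sigma, so w^-1 keeps the positive roots of Delta_Sigma positive. *)
Lemma ascent_no_inversion (S : {set 'I_n}) (w : {perm 'I_n.+1}) :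
  ascent_on S w -> no_inversion S w.
Proof.
move=> asc x [a [b [ab ->]]] [y [[c [d [cd ny]]] wy]] [_ span_ab].
rewrite -[y]opprK ny opprB act_eps_sub in wy.
have [ea eb] := eps_sub_inj (negbT (ltn_eqF ab)) wy.
pose f i := val ((w^-1)%g (inord i : 'I_n.+1)).
have f_incr : {in [pred i | (a <= i <= b)%N] &, {homo f : i j / (i < j)%N}}.
  apply: homo_ltn_in; first exact: ltn_trans.
    by move=> i j; rewrite !inE => /andP[ai _] /andP[_ jb] k ikj; rewrite inE; lia.
  move=> i; rewrite !inE => /andP[ai _] /andP[_ ib].
  have ik : (i < n)%N by have := ltn_ord b; lia.
  have := asc (Ordinal ik) (span_interval span_ab _); rewrite /f.
  have -> : lo (Ordinal ik) = inord i by apply: val_inj; rewrite /= inordK //; lia.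
  have -> : hi (Ordinal ik) = inord i.+1 by apply: val_inj; rewrite /= inordK //; lia.
  by apply; rewrite /=; lia.
have : (f a < f b)%N by apply: f_incr; rewrite // !inE ?leqnn ltnW.
rewrite /f !inord_val ea eb !permK => dc.
by have := ltn_trans cd dc; rewrite ltnn.
Qed.

Lemma inWpP (S : {set 'I_n}) (w : {perm 'I_n.+1}) :
  inWp S w <-> w \in Weyl n /\ ascent_on S w.
Proof.
split=> [[wW noinv] | [wW asc]]; split=> //.
  exact: no_inversion_ascent.
exact: ascent_no_inversion.
Qed.

Lemma cox_suffixE (l : seq 'I_n) (m : nat) : (m <= n)%N ->
  map val l = iota m (n - m) -> forall i : 'I_n.+1,
  val (foldr (@wmul n) 1%g [seq sref k | k <- l] i) =
    if (m <= i < n)%N then i.+1 else if val i == n then m else i.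
Proof.
elim: l m => [|k l IH] m hm /= hl i; have hi := ltn_ord i.
  have e : (n - m = 0)%N by rewrite -(size_iota m (n - m)) -hl.
  by rewrite perm1; repeat case: ifP => ?; lia.
have mn : (m < n)%N by move: hl; case E: (n - m)%N => [|t] //= _; lia.
move: hl; rewrite (_ : (n - m = (n - m.+1).+1)%N); last by lia.
case=> hk /(IH m.+1 mn)/(_ i); set F := foldr _ _ _ => e.
rewrite /wmul permM /sref.
case: tpermP => [Flo|Fhi|Flo Fhi].
- by rewrite Flo /= /bump /= hk in e *; move: e; repeat case: ifP => ?; lia.
- by rewrite Fhi /= /bump /= hk in e *; move: e; repeat case: ifP => ?; lia.
have Flo' : val (F i) != m by apply/eqP => Fm; apply: Flo; apply: val_inj; rewrite Fm /= hk.
have Fhi' : val (F i) != m.+1.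
  by apply/eqP => Fm; apply: Fhi; apply: val_inj; rewrite Fm /= /bump /= hk; lia.
have valF : val (F i) = nat_of_ord (F i) by [].
by move: e Flo' Fhi'; repeat case: ifP => ?; lia.
Qed.

Lemma coxE (i : 'I_n.+1) : val (cox n i) = if (i < n)%N then i.+1 else 0%N.
Proof.
rewrite /cox (@cox_suffixE _ 0) ?val_enum_ord ?subn0 //.
have vali : val i = nat_of_ord i by [].
by have := ltn_ord i; repeat case: ifP => ?; lia.
Qed.

Lemma cox_expE (m : nat) (i : 'I_n.+1) : val ((cox n ^+ m)%g i) = ((i + m) %% n.+1)%N.
Proof.
elim: m => [|m IH]; first by rewrite expg0 perm1 addn0 modn_small.
rewrite expgSr permM coxE IH addnS -(addn1 (i + m)) -[in RHS]modnDml.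
have := ltn_pmod (i + m) (ltn0Sn n); case: ifP => h _.
  by rewrite addn1 (@modn_small ((i + m) %% n.+1).+1).
have -> : ((i + m) %% n.+1 = n)%N by lia.
by rewrite addn1 modnn.
Qed.

Lemma wjE (j : 'I_n) (i : 'I_n.+1) :
  val (wj j i) = if (i + j.+1 < n.+1)%N then (i + j.+1)%N else (i + j.+1 - n.+1)%N.
Proof.
rewrite /wj cox_expE; case: ltnP => h; first by rewrite modn_small.
have := ltn_ord i; have := ltn_ord j => ? ?.
by rewrite -{1}(subnK h) modnDr modn_small //; lia.
Qed.

(* w_j^-1 is the shift by -(j+1): its only descent is at k = j
   (it sends j to n and j+1 to 0). *)
Lemma wj_ascent (j k : 'I_n) :
  (((wj j)^-1)%g (lo k) < ((wj j)^-1)%g (hi k))%N = (k != j).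
Proof.
set p := ((wj j)^-1)%g (lo k); set q := ((wj j)^-1)%g (hi k).
have hp : val (wj j p) = k by rewrite permKV.
have hq : val (wj j q) = k.+1 by rewrite permKV.
rewrite !wjE in hp hq; have := ltn_ord p; have := ltn_ord q.
have := ltn_ord j; have := ltn_ord k.
move: hp hq; case: eqVneq => [-> | kj].
  by repeat case: ifP => ?; lia.
have {}kj : nat_of_ord k != nat_of_ord j by [].
by repeat case: ifP => ?; lia.
Qed.

Lemma cox_Weyl : cox n \in Weyl n.
Proof.
rewrite /cox; elim: (enum 'I_n) => [|k l IH] /=; first exact: group1.
by rewrite /wmul groupM // mem_gen //; apply/imsetP; exists k.
Qed.

Lemma inWplus_Weyl (v : {perm 'I_n.+1}) : inWplus v -> v \in Weyl n.
Proof. by case=> [->|[j ->]]; [exact: group1 | exact/groupX/cox_Weyl]. Qed.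

(* If every alpha_k (k in Sigma) is v(alpha_k') for some k' in Sigma, then
   v^-1 sends (k, k+1) to (k', k'+1), so (vw)^-1 = w^-1 v^-1 inherits the
   ascents of w^-1 on Sigma. *)
Lemma ascent_wmul (S : {set 'I_n}) (v w : {perm 'I_n.+1}) :
  (forall k, k \in S -> exists k', k' \in S /\ Defs.act v (alpha k') = alpha k) ->
  ascent_on S w -> ascent_on S (wmul v w).
Proof.
move=> vS asc k kS; have [k' [k'S vk']] := vS k kS.
rewrite /alpha act_eps_sub in vk'.
have v_lo_hi : v (lo k') != v (hi k') by rewrite (inj_eq perm_inj) lo_neq_hi.
have [<- <-] := eps_sub_inj v_lo_hi vk'.
by rewrite /wmul invMg !permM !permK; exact: asc.
Qed.

End TypeAWeyl.

Theorem mainTheorem9 (n : nat) (hn : (1 <= n)%N) (S : {set 'I_n}) :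
  (forall j : 'I_n, inWp S (wj j) <-> j \notin S) /\
  (forall v w : {perm 'I_n.+1}, inWplusp S v -> inWp S w -> inWp S (wmul v w)).
Proof.
split=> [j | v w [vWplus [_ vS]]]; rewrite !inWpP.
  split=> [[_ asc] | jS].
    by apply/negP => /asc; rewrite wj_ascent eqxx.
  split; first exact/groupX/cox_Weyl.
  by move=> k kS; rewrite wj_ascent; apply: contraNneq jS => <-.
move=> [wW asc]; split; first by rewrite /wmul groupM // inWplus_Weyl.
exact: ascent_wmul.
Qed.
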